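(* Fix an integer $r\ge2$. There exist constants $d_0=d_0(r)>0$ and $K=K(r)>0$ such that for every $d>d_0$, every $\lambda\in[0,1]$ with $(r-1)d\lambda^2\le1$, and every BMS channel $P$, letting $\theta$ be the $\theta$-component of $P^{\times(r-1)}\circ B_{r,\lambda}$ and $\widetilde\theta=\theta\xi$ where $\xi\in\{\pm1\}$ with $\mathbb P[\xi=s\mid\theta]=\frac12+\frac12 s\theta$, we have $\big|\mathbb E\,\mathrm{arctanh}\,\widetilde\theta-s_{r,\lambda}(C_{\chi^2}(P))\big|\le K\lambda^3$ and $\big|\mathrm{Var}(\mathrm{arctanh}\,\widetilde\theta)-s_{r,\lambda}(C_{\chi^2}(P))\big|\le K\lambda^3$, where $s_{r,\lambda}(x)=\lambda^2\cdot\frac12\big((1+x)^{r-1}-(1-x)^{r-1}\big)$.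
   Context: $B_{r,\lambda}:\{\pm\}\to\{\pm\}^{r-1}$ is the kernel $B_{r,\lambda}(x|y)=\lambda+2^{-(r-1)}(1-\lambda)$ if $x_i=y$ for all $i$, and $2^{-(r-1)}(1-\lambda)$ otherwise. A channel $P:\{\pm\}\to\mathcal Y$ is BMS if there is a measurable involution $\sigma$ of $\mathcal Y$ with $P(E|+)=P(\sigma(E)|-)$. Every BMS channel is equivalent to $X\mapsto(\Delta,Z)$ with $\Delta\in[0,\frac12]$ a random variable independent of $X$ and $Z\mid(\Delta,X)\sim\mathrm{BSC}_\Delta(\cdot|X)$; the $\theta$-component is $\theta=1-2\Delta\in[0,1]$ (its law is determined by the channel). $C_{\chi^2}(P)=\mathbb E\theta^2$ is the $\chi^2$-information with uniform input. $P^{\times(r-1)}$ is the tensor power. *)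

From HB Require Import structures.
From mathcomp Require Import all_boot all_order all_algebra.
From mathcomp Require Import all_classical all_reals all_analysis.
Unset Printing Implicit Defensive.
Import Order.TTheory GRing.Theory Num.Theory.
Local Open Scope ring_scope.

Section BMS.
Variable R : realType.

(* sign of a channel symbol: true = +, false = - *)
Definition sgnb (b : bool) : R := if b then 1 else -1.

Definition atanh (x : R) : R := ln ((1 + x) / (1 - x)) / 2.

(* The kernel B_{r,lambda} : {+-} -> {+-}^n  (n = r-1), value B(u | x). *)
Definition Bker (lam : R) (n : nat) (x : bool) (u : n.-tuple bool) : R :=
  if all (fun b => b == x) u then lam + 2 ^- n * (1 - lam)
  else 2 ^- n * (1 - lam).

(* Canonical BMS channel with theta-law mu: input u, output (t, z) with
   t ~ mu independent of u and z | (t,u) ~ BSC_{(1-t)/2}(.|u).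
   Density of z given (t,u) w.r.t. counting measure: *)
Definition bsc_dens (t : R) (u z : bool) : R := (1 + sgnb u * sgnb z * t) / 2.

(* Density of the output ((t_1,z_1),...,(t_n,z_n)) of P^{x n} o B_{r,lambda}
   on input x, w.r.t. mu^{(x) n} (x) counting. *)
Definition comp_dens (lam : R) (n : nat) (x : bool) (ts : seq R)
    (zs : n.-tuple bool) : R :=
  \sum_(u : n.-tuple bool)
     Bker lam n x u * \prod_(i : 'I_n) bsc_dens (nth 0 ts i) (tnth u i) (tnth zs i).

Definition theta_out (lam : R) (n : nat) (ts : seq R) (zs : n.-tuple bool) : R :=
  `|comp_dens lam n true ts zs - comp_dens lam n false ts zs|
    / (comp_dens lam n true ts zs + comp_dens lam n false ts zs).

Fixpoint iint (mu : {measure set R -> \bar R}) (n : nat) (F : seq R -> R) : R :=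
  match n with
  | 0 => F [::]
  | n'.+1 => \int[mu]_t iint mu n' (fun s => F (t :: s))
  end.

(* E[g(theta)] where theta is the theta-component of P^{x n} o B_{r,lambda},
   computed as E[g(theta(Y))] with Y ~ (P^{x n} o B)(. | +). *)
Definition theta_comp_expect (mu : {measure set R -> \bar R}) (lam : R) (n : nat)
    (g : R -> R) : R :=
  iint mu n (fun ts => \sum_(zs : n.-tuple bool)
                         comp_dens lam n true ts zs * g (theta_out lam n ts zs)).

(* E[h(theta~)] with theta~ = theta * xi, P[xi = s | theta] = 1/2 + s theta / 2 *)
Definition tilde_expect (mu : {measure set R -> \bar R}) (lam : R) (n : nat)
    (h : R -> R) : R :=
  theta_comp_expect mu lam n
    (fun t => \sum_(s : bool) (1 + sgnb s * t) / 2 * h (sgnb s * t)).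

Definition mean_atanh_tilde mu lam n : R := tilde_expect mu lam n atanh.

Definition var_atanh_tilde mu lam n : R :=
  tilde_expect mu lam n (fun v => atanh v ^+ 2) - (mean_atanh_tilde mu lam n) ^+ 2.

Definition C_chi2 (mu : {measure set R -> \bar R}) : R := \int[mu]_t (t ^+ 2).

Definition s_fun (r : nat) (lam x : R) : R :=
  lam ^+ 2 * (1 / 2 * ((1 + x) ^+ (r - 1) - (1 - x) ^+ (r - 1))).

End BMS.

From HB Require Import structures.
From mathcomp Require Import all_boot all_order all_algebra.
From mathcomp Require Import all_classical all_reals all_analysis.
From mathcomp Require Import ring lra.
Import Order.TTheory GRing.Theory Num.Theory.
Import numFieldNormedType.Exports.
Local Open Scope ring_scope.
Local Open Scope classical_set_scope.

(* 1. Scalar part: averaging h(theta xi) over the sign xi gives theta atanh theta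
      for h = atanh and atanh^2 theta for h = atanh^2; both equal theta^2 up to
      3 theta^3 for theta in [0, 1/2] ([near_square]).
   2. Fixed theta-components t_1..t_n of P: the composed channel is the mixture
      N^-1 (1 + lambda (lik x z - 1)) of an informative and a useless branch, so
      theta(z) = |a - b| / (2 + a + b) with a, b = O(lambda N).  An elementary
      estimate ([ratio_sq_approx]) and the moment identity for lik give
      E[H(theta)] = lambda^2/2 (prod (1 + t_i^2) - prod (1 - t_i^2)) + O((lambda N)^3).
   3. Integrating t_1..t_n against the theta-law of P coordinate by coordinate
      ([iint_approx]) turns the products into (1 +- C)^n; since the integrands
      are not known to be measurable, the comparison of integrals goes through
      the supremum definition of the integral ([Rintegral_near]).
   4. The theorem follows with d0 = 4 N^2 (forcing lambda N <= 1/2), the mean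
      from step 3 and the variance from the two moments ([variance_near]). *)

Section Atanh.
Variable R : realType.
Implicit Types x : R.

Lemma ln1D_ge x : -1 < x -> x / (1 + x) <= ln (1 + x).
Proof.
move=> hx; have h0 : 0 < 1 + x by lra.
have hinv : -1 < (1 + x)^-1 - 1.
  have : 0 < (1 + x)^-1 by rewrite invr_gt0.
  lra.
have := le_ln1Dx hinv; rewrite addrC subrK lnV ?posrE // => hle.
have -> : x / (1 + x) = - ((1 + x)^-1 - 1) by field; lra.
lra.
Qed.

Lemma atanh_odd x : -1 < x < 1 -> atanh R (- x) = - atanh R x.
Proof.
move=> /andP[h1 h2]; rewrite /atanh.
have -> : (1 + - x) / (1 - - x) = ((1 + x) / (1 - x))^-1.
  by rewrite opprK invf_div addrC.
rewrite lnV ?mulNr // posrE divr_gt0 //; lra.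
Qed.

Lemma atanh_err x : `|x| <= 1/2 -> `|atanh R x - x| <= x ^+ 2.
Proof.
rewrite ler_norml => /andP[ha hb].
have p1 : 0 < 1 + x by lra.
have p2 : 0 < 1 - x by lra.
have e : atanh R x = (ln (1 + x) - ln (1 - x)) / 2 by rewrite /atanh ln_div ?posrE.
have u1 : ln (1 + x) <= x by apply: le_ln1Dx; lra.
have u2 : ln (1 + - x) <= - x by apply: le_ln1Dx; lra.
have l1 : x / (1 + x) <= ln (1 + x) by apply: ln1D_ge; lra.
have l2 : (- x) / (1 + - x) <= ln (1 + - x) by apply: ln1D_ge; lra.
have q1 : x ^+ 2 / (1 + x) <= 2 * x ^+ 2 by rewrite ler_pdivrMr //; nra.
have q2 : x ^+ 2 / (1 - x) <= 2 * x ^+ 2 by rewrite ler_pdivrMr //; nra.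
have e1 : x / (1 + x) = x - x ^+ 2 / (1 + x) by field; lra.
have e2 : (- x) / (1 + - x) = - x - x ^+ 2 / (1 - x) by field; lra.
rewrite e ler_norml; apply/andP; split; lra.
Qed.

Definition sign_avg (h : R -> R) x : R :=
  \sum_(s : bool) (1 + sgnb R s * x) / 2 * h (sgnb R s * x).

Lemma sign_avg_odd h x : h (- x) = - h x -> sign_avg h x = x * h x.
Proof. by move=> hodd; rewrite /sign_avg big_bool /= /sgnb !mul1r !mulN1r hodd; field. Qed.

Lemma sign_avg_even h x : h (- x) = h x -> sign_avg h x = h x.
Proof. by move=> hev; rewrite /sign_avg big_bool /= /sgnb !mul1r !mulN1r hev; field. Qed.

Definition near_square (H : R -> R) : Prop :=
  forall x, 0 <= x <= 1/2 -> `|H x - x ^+ 2| <= 3 * x ^+ 3.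

Lemma near_square_atanh : near_square (sign_avg (atanh R)).
Proof.
move=> x /andP[h0 h1].
rewrite sign_avg_odd; last by apply: atanh_odd; apply/andP; split; lra.
have E : `|atanh R x - x| <= x ^+ 2 by apply: atanh_err; rewrite ger0_norm.
have -> : x * atanh R x - x ^+ 2 = x * (atanh R x - x) by ring.
rewrite normrM ger0_norm // (exprS x 2).
have : x * `|atanh R x - x| <= x * x ^+ 2 by apply: ler_wpM2l.
have : 0 <= x * x ^+ 2 by apply: mulr_ge0 => //; apply: exprn_ge0.
lra.
Qed.

Lemma near_square_atanh2 : near_square (sign_avg (fun v => atanh R v ^+ 2)).
Proof.
move=> x /andP[h0 h1].
rewrite sign_avg_even; last first.
  by rewrite atanh_odd ?sqrrN //; apply/andP; split; lra.
have E : `|atanh R x - x| <= x ^+ 2 by apply: atanh_err; rewrite ger0_norm.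
set a := atanh R x in E *.
have -> : a ^+ 2 - x ^+ 2 = (a - x) * ((a - x) + 2 * x) by ring.
have F : `|a - x + 2 * x| <= x ^+ 2 + 2 * x.
  apply: (le_trans (ler_normD _ _)).
  by rewrite [`|2 * x|]ger0_norm ?lerD2r //; lra.
rewrite normrM; apply: (le_trans (ler_pM _ _ E F)) => //.
have -> : x ^+ 2 * (x ^+ 2 + 2 * x) = x ^+ 3 * (x + 2) by ring.
rewrite [3 * _]mulrC ler_wpM2l ?exprn_ge0 //; lra.
Qed.

End Atanh.

(* If the two likelihoods of an
   output are 1 + a and 1 + b with a, b small, the output's theta is
   |a - b| / (2 + a + b), and its weighted square is (a - b)^2 / 4 up to O(e^3). *)
Lemma ratio_sq_approx {R : realFieldType} {a b e : R} :
  e <= 1/2 -> `|a| <= e -> `|b| <= e -> `|a - b| <= e ->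
  let th := `|a - b| / (2 + a + b) in
  0 <= th <= e /\ `|(1 + a) * th ^+ 2 - (a - b) ^+ 2 / 4| <= 2 * e ^+ 3.
Proof.
move=> he; rewrite !ler_norml => /andP[a1 a2] /andP[b1 b2] /andP[d1 d2] th.
have hT : 1 <= 2 + a + b by lra.
have hT0 : 0 < 2 + a + b by lra.
have e0 : 0 <= e by lra.
have hD2 : (a - b) ^+ 2 <= e ^+ 2.
  by rewrite -real_normK ?num_real // lerXn2r ?nnegrE // ler_norml; lra.
split.
  apply/andP; split; first by rewrite divr_ge0 //; lra.
  rewrite ler_pdivrMr //.
  have : `|a - b| <= e by rewrite ler_norml; lra.
  nra.
have th2 : th ^+ 2 = (a - b) ^+ 2 / (2 + a + b) ^+ 2.
  by rewrite /th expr_div_n real_normK // num_real.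
have -> : (1 + a) * th ^+ 2 - (a - b) ^+ 2 / 4 =
          - ((a - b) ^+ 2 * (4 * b + (a + b) ^+ 2)) / (4 * (2 + a + b) ^+ 2).
  by rewrite th2; field; rewrite lt0r_neq0.
have hV : `|4 * b + (a + b) ^+ 2| <= 8 * e.
  rewrite ler_norml; apply/andP; split; nra.
have hden : 4 <= 4 * (2 + a + b) ^+ 2 by nra.
rewrite normrM normrN normrM normfV [`|4 * _|]ger0_norm; last lra.
rewrite [`|(a - b) ^+ 2|]ger0_norm ?sqr_ge0 //.
rewrite ler_pdivrMr; last lra.
have hprod : (a - b) ^+ 2 * `|4 * b + (a + b) ^+ 2| <= e ^+ 2 * (8 * e).
  by apply: ler_pM => //; rewrite sqr_ge0.
have : e ^+ 2 * (8 * e) = 2 * e ^+ 3 * 4 by ring.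
have : 0 <= 2 * e ^+ 3 by rewrite mulr_ge0 ?exprn_ge0.
nra.
Qed.

Lemma sum_tuple_prod {R : comNzRingType} {n : nat} (G : 'I_n -> bool -> R) :
  \sum_(u : n.-tuple bool) \prod_(i < n) G i (tnth u i) =
  \prod_(i < n) (G i true + G i false).
Proof.
under [RHS]eq_bigr do rewrite -big_bool.
rewrite bigA_distr_bigA /=.
rewrite (reindex (fun u : n.-tuple bool => [ffun i => tnth u i])) /=; last first.
  exists (fun f : {ffun 'I_n -> bool} => [tuple f i | i < n]) => [u _ | f _].
    by apply: eq_from_tnth => i; rewrite tnth_mktuple ffunE.
  by apply/ffunP => i; rewrite ffunE tnth_mktuple.
apply: eq_bigr => u _; apply: eq_bigr => i _.
by rewrite ffunE.
Qed.

Section Channel.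
Variable R : realType.
Variables (n : nat) (ts : seq R).
Local Notation t i := (nth 0 ts i).
Local Notation N := ((2 : R) ^+ n).

Let N_prod : N = \prod_(i < n) (2 : R).
Proof. by rewrite prodr_const card_ord. Qed.

(* [lik x zs] is 2^n times the probability of the BSC outputs [zs] when every
   input bit equals x, i.e. on the "informative" branch of B_{r,lambda}. *)
Definition lik (x : bool) (zs : n.-tuple bool) : R :=
  \prod_(i < n) (1 + sgnb R x * (sgnb R (tnth zs i) * t i)).

(* The composed channel is a mixture: with weight lambda the inputs all equal
   x, with weight 1 - lambda they are uniform and the output carries no
   information about x. *)
Lemma comp_dens_lik lam x (zs : n.-tuple bool) :
  comp_dens R lam n x ts zs = N^-1 * (1 + lam * (lik x zs - 1)).
Proof.
pose ux : n.-tuple bool := [tuple x | _ < n].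
have Bsplit u : Bker R lam n x u = N^-1 * (1 - lam) + (if u == ux then lam else 0).
  rewrite /Bker; case: ifP => hu; case: eqP => hux.
  - by rewrite addrC.
  - by case: hux; apply: eq_from_tnth => i; rewrite tnth_mktuple; apply/eqP/(all_tnthP hu).
  - by move: hu; rewrite hux; move/negP; case; apply/all_tnthP => i; rewrite tnth_mktuple.
  - by rewrite addr0.
rewrite /comp_dens (eq_bigr _ (fun u _ => congr1 (fun c => c * _) (Bsplit u))).
rewrite (eq_bigr _ (fun u _ => mulrDl _ _ _)) big_split /= -mulr_sumr.
rewrite (sum_tuple_prod (fun i b => bsc_dens R (t i) b (tnth zs i))).
have total : \prod_(i < n) (bsc_dens R (t i) true (tnth zs i) +
                            bsc_dens R (t i) false (tnth zs i)) = 1.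
  by apply: big1 => i _; rewrite /bsc_dens /sgnb; field.
rewrite total mulr1.
rewrite (bigD1 ux) //= eqxx [\sum_(_ | _) _]big1 ?addr0; last first.
  by move=> u /negPf ->; rewrite mul0r.
have -> : \prod_(i < n) bsc_dens R (t i) (tnth ux i) (tnth zs i) = N^-1 * lik x zs.
  have half : N^-1 = \prod_(i < n) 2^-1 by rewrite prodr_const card_ord exprVn.
  rewrite /lik half -big_split /=.
  by apply: eq_bigr => i _; rewrite /bsc_dens tnth_mktuple; ring.
by ring.
Qed.


Lemma theta_out_lik lam zs :
  theta_out R lam n ts zs =
  `|lam * (lik true zs - 1) - lam * (lik false zs - 1)| /
    (2 + lam * (lik true zs - 1) + lam * (lik false zs - 1)).
Proof.
rewrite /theta_out !comp_dens_lik -mulrBr -mulrDr normrM.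
rewrite gtr0_norm ?invr_gt0 ?exprn_gt0 // invfM mulrACA divff ?mul1r; last first.
  by rewrite invr_eq0 expf_neq0.
by congr (`|_| / _); ring.
Qed.

Lemma sum_lik x : \sum_(zs : n.-tuple bool) lik x zs = N.
Proof.
rewrite (sum_tuple_prod (fun i b => 1 + sgnb R x * (sgnb R b * t i))).
rewrite N_prod.
by apply: eq_bigr => i _; rewrite /sgnb; ring.
Qed.

(* Second moment of the likelihood difference: this is where C_chi2 enters. *)
Lemma sum_lik_diff2 :
  \sum_(zs : n.-tuple bool) (lik true zs - lik false zs) ^+ 2 =
  N * (2 * (\prod_(i < n) (1 + t i ^+ 2) - \prod_(i < n) (1 - t i ^+ 2))).
Proof.
pose f (x b : bool) (i : 'I_n) := 1 + sgnb R x * (sgnb R b * t i).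
have expand zs : (lik true zs - lik false zs) ^+ 2 =
   \prod_(i < n) (f true (tnth zs i) i ^+ 2) + \prod_(i < n) (f false (tnth zs i) i ^+ 2)
   - 2 * \prod_(i < n) (f true (tnth zs i) i * f false (tnth zs i) i).
  by rewrite /lik !prodrXl big_split /=; ring.
rewrite (eq_bigr _ (fun zs _ => expand zs)) !big_split /= sumrN -mulr_sumr.
rewrite (sum_tuple_prod (fun i b => f true b i ^+ 2)).
rewrite (sum_tuple_prod (fun i b => f false b i ^+ 2)).
rewrite (sum_tuple_prod (fun i b => f true b i * f false b i)).
have double (F : 'I_n -> R) : \prod_(i < n) (2 * F i) = N * \prod_(i < n) F i.
  by rewrite big_split /= -N_prod.
have sq_p : \prod_(i < n) (f true true i ^+ 2 + f true false i ^+ 2) =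
            N * \prod_(i < n) (1 + t i ^+ 2).
  by rewrite -double; apply: eq_bigr => i _; rewrite /f /sgnb; ring.
have sq_m : \prod_(i < n) (f false true i ^+ 2 + f false false i ^+ 2) =
            N * \prod_(i < n) (1 + t i ^+ 2).
  by rewrite -double; apply: eq_bigr => i _; rewrite /f /sgnb; ring.
have cross : \prod_(i < n) (f true true i * f false true i + f true false i * f false false i) =
             N * \prod_(i < n) (1 - t i ^+ 2).
  by rewrite -double; apply: eq_bigr => i _; rewrite /f /sgnb; ring.
by rewrite sq_p sq_m cross; ring.
Qed.

Hypothesis ts01 : forall i : 'I_n, 0 <= t i <= 1.

(* For theta-components in [0, 1] each factor of lik lies in [0, 2]. *)
Lemma lik_bounds x zs : 0 <= lik x zs <= N.
Proof.
have hf i : 0 <= 1 + sgnb R x * (sgnb R (tnth zs i) * t i) <= 2.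
  by have := ts01 i; rewrite /sgnb; case: x; case: (tnth zs i) => /andP[? ?];
     apply/andP; split; lra.
apply/andP; split; first by apply: prodr_ge0 => i _; case/andP: (hf i).
by rewrite N_prod; apply: ler_prod => i _; exact: hf.
Qed.


Section Estimates.
Variables (lam : R) (H : R -> R).
Hypotheses (hH : near_square R H) (lam0 : 0 <= lam) (lamN : lam * N <= 1/2).
Let e := lam * N.
Let a zs := lam * (lik true zs - 1).
Let b zs := lam * (lik false zs - 1).

Lemma output_term_approx zs :
  `|comp_dens R lam n true ts zs * H (theta_out R lam n ts zs)
    - N^-1 * ((a zs - b zs) ^+ 2 / 4)|
  <= N^-1 * ((1 + a zs) * (3 * e ^+ 3) + 2 * e ^+ 3).
Proof.
have hN : 1 <= N by rewrite exprn_ege1 //; lra.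
have e0 : 0 <= e by rewrite mulr_ge0 //; lra.
have he : e <= 1/2 := lamN.
have /andP[L0 LN] := lik_bounds true zs.
have /andP[M0 MN] := lik_bounds false zs.
have small L : 0 <= L <= N -> `|lam * (L - 1)| <= e.
  move=> /andP[? ?]; rewrite normrM ger0_norm // ler_wpM2l //.
  by rewrite ler_norml; apply/andP; split; lra.
have hab : `|a zs - b zs| <= e.
  rewrite /a /b -mulrBr normrM ger0_norm // ler_wpM2l //.
  by rewrite ler_norml; apply/andP; split; lra.
have ha : `|a zs| <= e := small _ (lik_bounds true zs).
have hb : `|b zs| <= e := small _ (lik_bounds false zs).
have [/andP[th0 the] approx] := ratio_sq_approx he ha hb hab.
rewrite comp_dens_lik theta_out_lik -/(a zs) -/(b zs).
set th := `|a zs - b zs| / (2 + a zs + b zs) in th0 the approx *.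
have hA : 0 <= 1 + a zs by move: ha; rewrite ler_norml; lra.
have hHth : `|H th - th ^+ 2| <= 3 * e ^+ 3.
  apply: le_trans (hH _ _) _; first by apply/andP; split; lra.
  by rewrite ler_wpM2l // lerXn2r ?nnegrE.
rewrite -mulrA -mulrBr normrM gtr0_norm ?invr_gt0 ?exprn_gt0 // ler_wpM2l //.
have -> : (1 + a zs) * H th - (a zs - b zs) ^+ 2 / 4 =
          (1 + a zs) * (H th - th ^+ 2) + ((1 + a zs) * th ^+ 2 - (a zs - b zs) ^+ 2 / 4).
  by ring.
apply: le_trans (ler_normD _ _) _; apply: lerD => //.
by rewrite normrM ger0_norm // ler_wpM2l.
Qed.

Lemma outputs_sum_approx :
  `| \sum_(zs : n.-tuple bool) comp_dens R lam n true ts zs * H (theta_out R lam n ts zs)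
     - lam ^+ 2 / 2 * (\prod_(i < n) (1 + t i ^+ 2) - \prod_(i < n) (1 - t i ^+ 2)) |
  <= 5 * e ^+ 3.
Proof.
have N0 : N != 0 by rewrite expf_neq0.
have target : lam ^+ 2 / 2 * (\prod_(i < n) (1 + t i ^+ 2) - \prod_(i < n) (1 - t i ^+ 2))
    = \sum_(zs : n.-tuple bool) N^-1 * ((a zs - b zs) ^+ 2 / 4).
  have ab zs : N^-1 * ((a zs - b zs) ^+ 2 / 4) =
               N^-1 * (lam ^+ 2 / 4) * (lik true zs - lik false zs) ^+ 2.
    by rewrite /a /b; ring.
  by rewrite (eq_bigr _ (fun zs _ => ab zs)) -mulr_sumr sum_lik_diff2; field.
have sum_a : \sum_(zs : n.-tuple bool) (1 + a zs) = N.
  rewrite big_split /= -mulr_sumr sumrB sum_lik !sumr_const card_tuple card_bool.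
  by rewrite natrX subrr mulr0 addr0.
rewrite target -sumrB; apply: le_trans (ler_norm_sum _ _ _) _.
apply: le_trans (ler_sum _ (fun zs _ => output_term_approx zs)) _.
rewrite -mulr_sumr big_split /= -mulr_suml sum_a sumr_const card_tuple card_bool.
rewrite -(mulr_natr (2 * e ^+ 3)) natrX le_eqVlt; apply/orP; left; apply/eqP.
by field.
Qed.

End Estimates.

End Channel.

Section IntegralBounds.
Context {d : measure_display} {T : measurableType d} {R : realType}.
Context {mu : {measure set T -> \bar R}}.
Local Open Scope ereal_scope.
Import HBNNSimple.

(* Monotonicity of the integral of nonnegative functions needs no measurability:
   the integral is a supremum over the simple functions lying below. *)
Lemma le_integral_nonmeas (u v : T -> \bar R) :
  (forall x, 0 <= u x) -> (forall x, 0 <= v x) -> (forall x, u x <= v x) ->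
  \int[mu]_x u x <= \int[mu]_x v x.
Proof.
move=> u0 v0 uv; rewrite (ge0_integralTE _ u0) (ge0_integralTE _ v0).
apply: ge_ereal_sup => _ [h /= hu <-].
by apply: ereal_sup_ubound; exists h => //= x; exact: le_trans (hu x) (uv x).
Qed.

Context {D : set T}.
Hypotheses (mD : measurable D) (muD : mu (~` D) = 0).

Lemma le_integral_nonmeas_ae (u v : T -> \bar R) :
  (forall x, 0 <= u x) -> (forall x, 0 <= v x) -> (forall x, D x -> u x <= v x) ->
  \int[mu]_x u x <= \int[mu]_x v x.
Proof.
move=> u0 v0 uv; rewrite (ge0_integralTE _ u0).
apply: ge_ereal_sup => _ [h /= hu <-].
rewrite -integralT_nnsfun.
rewrite (@ge0_negligible_integral _ _ _ mu setT (~` D) (fun x => (h x)%:E)) //; last 3 first.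
- exact: measurableC.
- by apply/measurable_realfun.measurable_EFinP; exact: measurable_funTS.
- by move=> x _; rewrite lee_fin.
rewrite setTD setCK integral_mkcond; apply: le_integral_nonmeas => // x.
- by rewrite /patch; case: ifP => // _; rewrite lee_fin.
- rewrite /patch; case: ifP => [/set_mem Dx|_]; last exact: v0.
  exact: le_trans (hu x) (uv x Dx).
Qed.

Local Open Scope ring_scope.

Lemma le_integral_parts {f g : T -> R} : (forall x, D x -> f x <= g x) ->
  (\int[mu]_x ((f^\+) x)%:E <= \int[mu]_x ((g^\+) x)%:E)%E /\
  (\int[mu]_x ((g^\-) x)%:E <= \int[mu]_x ((f^\-) x)%:E)%E.
Proof.
move=> fg; split; apply: le_integral_nonmeas_ae => x;
  rewrite ?lee_fin ?funrpos_ge0 ?funrneg_ge0 // => Dx;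
  by rewrite ge_max !le_max lexx !orbT ?lerN2 fg.
Qed.

Lemma Rintegral_parts (f : T -> R) :
  (\int[mu]_x ((f^\+) x)%:E)%E \is a fin_num ->
  (\int[mu]_x ((f^\-) x)%:E)%E \is a fin_num ->
  Rintegral mu setT f =
  fine (\int[mu]_x ((f^\+) x)%:E)%E - fine (\int[mu]_x ((f^\-) x)%:E)%E.
Proof.
move=> fp fn; rewrite /Rintegral integralE -fineB //; congr (fine (_ - _)).
  by apply: eq_integral => x _; rewrite -[in RHS]/((EFin \o f^\+) x) -funerpos.
by apply: eq_integral => x _; rewrite -[in RHS]/((EFin \o f^\-) x) -funerneg.
Qed.

Lemma integrable_parts_fin {g : T -> R} : mu.-integrable setT (EFin \o g) ->
  (\int[mu]_x ((g^\+) x)%:E)%E \is a fin_num /\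
  (\int[mu]_x ((g^\-) x)%:E)%E \is a fin_num.
Proof.
move=> ig; split.
  by have := integrable_funepos measurableT ig; rewrite funerpos; exact: integrable_fin_num.
by have := integrable_funeneg measurableT ig; rewrite funerneg; exact: integrable_fin_num.
Qed.

Lemma Rintegral_between (f gm gp : T -> R) :
  mu.-integrable setT (EFin \o gm) -> mu.-integrable setT (EFin \o gp) ->
  (forall x, D x -> gm x <= f x <= gp x) ->
  Rintegral mu setT gm <= Rintegral mu setT f <= Rintegral mu setT gp.
Proof.
move=> igm igp hf.
have [up_p dn_p] := le_integral_parts (fun x Dx => proj2 (andP (hf x Dx))).
have [up_m dn_m] := le_integral_parts (fun x Dx => proj1 (andP (hf x Dx))).
have [gmp gmn] := integrable_parts_fin igm.
have [gpp gpn] := integrable_parts_fin igp.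
have fin_below (a b : \bar R) : (0 <= a)%E -> (a <= b)%E -> b \is a fin_num -> a \is a fin_num.
  by move=> a0 ab bf; rewrite ge0_fin_numE // (le_lt_trans ab) // ltey_eq bf.
have fp : (\int[mu]_x ((f^\+) x)%:E)%E \is a fin_num.
  by apply: fin_below up_p gpp; apply: integral_ge0 => x _; rewrite lee_fin funrpos_ge0.
have fn : (\int[mu]_x ((f^\-) x)%:E)%E \is a fin_num.
  by apply: fin_below dn_m gmn; apply: integral_ge0 => x _; rewrite lee_fin funrneg_ge0.
rewrite !Rintegral_parts //.
have := fine_le fp gpp up_p; have := fine_le gpn fn dn_p.
have := fine_le gmp fp up_m; have := fine_le fn gmn dn_m.
move=> *; apply/andP; split; lra.
Qed.

Hypothesis muT : mu setT = 1%E.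

Lemma bdd_integrable {g : T -> R} (B : R) : measurable_fun setT g ->
  (forall x, `|g x| <= B) -> mu.-integrable setT (EFin \o g).
Proof.
move=> mg hg; apply: measurable_bounded_integrable => //; first by rewrite muT ltry.
exists B; split; first by rewrite num_real.
by move=> M hM x _; apply: le_trans (hg x) (ltW hM).
Qed.

Lemma Rintegral_near {f g : T -> R} {c B : R} : 0 <= c -> measurable_fun setT g ->
  (forall x, `|g x| <= B) -> (forall x, D x -> `|f x - g x| <= c) ->
  `|Rintegral mu setT f - Rintegral mu setT g| <= c.
Proof.
move=> c0 mg hg hfg.
have shifted (s : R) : `|s| <= c ->
    mu.-integrable setT (EFin \o (fun x => g x + s)) /\
    Rintegral mu setT (fun x => g x + s) = Rintegral mu setT g + s.
  move=> hs; have ig := bdd_integrable B mg hg.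
  have ics : mu.-integrable setT (EFin \o (fun=> s)).
    by apply: (bdd_integrable c) => //; exact: measurable_cst.
  split; last by rewrite RintegralD // Rintegral_cst // muT /= mulr1.
  apply: (bdd_integrable (B + c)) => [|x].
    by apply: measurable_realfun.measurable_funD => //; exact: measurable_cst.
  by apply: le_trans (ler_normD _ _) _; apply: lerD.
have nc : `|c| <= c by rewrite ger0_norm.
have nmc : `|- c| <= c by rewrite normrN ger0_norm.
have [igp Rgp] := shifted c nc.
have [igm Rgm] := shifted (- c) nmc.
suff : Rintegral mu setT g - c <= Rintegral mu setT f <= Rintegral mu setT g + c.
  by rewrite ler_norml => /andP[? ?]; apply/andP; split; lra.
rewrite -Rgp -Rgm; apply: Rintegral_between => // x Dx.
by have := hfg x Dx; rewrite ler_norml => /andP[? ?]; apply/andP; split; lra.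
Qed.

End IntegralBounds.

Section IteratedIntegral.
Context {R : realType} {mu : {measure set R -> \bar R}}.
Hypothesis muT : mu setT = 1%E.
Let D : set R := `[0, 1]%classic.
Hypothesis muD : mu (~` D) = 0%E.
Context {p q : R -> R} {Bp Bq : R}.
Hypotheses (mp : measurable_fun setT p) (mq : measurable_fun setT q).
Hypotheses (hp : forall x, `|p x| <= Bp) (hq : forall x, `|q x| <= Bq).

Let mD : measurable D. Proof. exact: measurable_itv. Qed.

(* Induction on n, integrating the first
   coordinate last; F itself need not be measurable. *)
Lemma iint_approx n : forall (F : seq R -> R) (a b c : R),
  (forall ts, size ts = n -> all (fun t => 0 <= t <= 1) ts ->
     `|F ts - (a * \prod_(t <- ts) p t + b * \prod_(t <- ts) q t)| <= c) ->
  `|iint R mu n F - (a * (Rintegral mu setT p) ^+ n + b * (Rintegral mu setT q) ^+ n)|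
  <= c.
Proof.
elim: n => [|n IH] F a b c hF; first by have := hF [::] erefl erefl; rewrite !big_nil.
set P := Rintegral mu setT p; set Q := Rintegral mu setT q.
pose g t := (a * P ^+ n) * p t + (b * Q ^+ n) * q t.
have scaled_int (k : R) (h : R -> R) (B : R) : measurable_fun setT h ->
    (forall x, `|h x| <= B) -> mu.-integrable setT (EFin \o (fun t => k * h t)).
  move=> mh bh; apply: (bdd_integrable muT (`|k| * B)) => [|x].
    by apply: measurable_realfun.measurable_funM => //; exact: measurable_cst.
  by rewrite normrM ler_wpM2l.
have mg : measurable_fun setT g.
  by apply: measurable_realfun.measurable_funD;
    apply: measurable_realfun.measurable_funM => //; exact: measurable_cst.
have hg x : `|g x| <= `|a * P ^+ n| * Bp + `|b * Q ^+ n| * Bq.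
  by apply: le_trans (ler_normD _ _) _; rewrite !normrM; apply: lerD; apply: ler_wpM2l.
have ip := bdd_integrable muT Bp mp hp; have iq := bdd_integrable muT Bq mq hq.
have Rg : Rintegral mu setT g = a * P ^+ n.+1 + b * Q ^+ n.+1.
  rewrite /g RintegralD //;
    [| exact: (scaled_int _ _ Bp mp hp) | exact: (scaled_int _ _ Bq mq hq)].
  by rewrite !RintegralZl // -/P -/Q !exprSr !mulrA.
have near_t t : D t -> `|iint R mu n (fun s => F (t :: s)) - g t| <= c.
  move=> Dt; have ht : 0 <= t <= 1 by move: Dt; rewrite /D /= in_itv.
  have -> : g t = a * p t * P ^+ n + b * q t * Q ^+ n by rewrite /g; ring.
  apply: IH => ts hs hall.
  have := hF (t :: ts); rewrite /= hs ht hall !big_cons !mulrA; exact.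
have D0 : D 0 by rewrite /D /= in_itv /= lexx ler01.
rewrite /= -Rg; apply: (Rintegral_near mD muD muT _ mg hg near_t).
exact: le_trans (normr_ge0 _) (near_t 0 D0).
Qed.

End IteratedIntegral.

Section ThetaLaw.
Context {R : realType} {mu : probability R R}.
Hypothesis mu01 : mu `[0, 1]%classic = 1%E.
Let D : set R := `[0, 1]%classic.
Let mD : measurable D. Proof. exact: measurable_itv. Qed.
Let muT : (mu : {measure set R -> \bar R}) setT = 1%E. Proof. exact: probability_setT. Qed.
Let muD : (mu : {measure set R -> \bar R}) (~` D) = 0%E.
Proof. by have := probability_setC mu mD; rewrite mu01 subee. Qed.

(* theta^2 cut off outside [0, 1], where mu lives: a bounded measurable version. *)
Let sq : R -> R := (fun t : R => t ^+ 2) \_ D.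
Let sq_D t : D t -> sq t = t ^+ 2.
Proof. by move=> Dt; rewrite /sq /patch mem_set. Qed.
Let sq01 t : 0 <= sq t <= 1.
Proof.
rewrite /sq /patch; case: ifP => [/set_mem|]; last by rewrite lexx ler01.
by rewrite /D /= in_itv /= => /andP[a b]; rewrite sqr_ge0 expr2 mulr_ile1.
Qed.
Let msq : measurable_fun setT sq.
Proof. by apply/(measurable_restrictT _ mD); exact: measurable_realfun.exprn_measurable. Qed.
Let sq_bound t : `|sq t| <= 1.
Proof. by have /andP[a b] := sq01 t; rewrite ger0_norm. Qed.
Let one_integrable : mu.-integrable setT (EFin \o (fun=> (1 : R))).
Proof. by apply: (bdd_integrable muT 1) => [|t]; [exact: measurable_cst | rewrite normr1]. Qed.

Lemma C_chi2_cutoff : C_chi2 R mu = Rintegral mu setT sq.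
Proof.
apply/eqP; rewrite -subr_eq0 -normr_le0.
apply: (Rintegral_near mD muD muT (lexx 0) msq sq_bound) => t Dt.
by rewrite sq_D // subrr normr0.
Qed.

Lemma C_chi2_01 : 0 <= C_chi2 R mu <= 1.
Proof.
rewrite C_chi2_cutoff; apply/andP; split.
  by apply: Rintegral_ge0 => t _; case/andP: (sq01 t).
have := le_Rintegral measurableT (bdd_integrable muT 1 msq sq_bound) one_integrable.
by rewrite Rintegral_cst // muT /= mulr1; apply => t _; case/andP: (sq01 t).
Qed.

Lemma theta_comp_expect_approx {n : nat} {lam : R} {H : R -> R} :
  near_square R H -> 0 <= lam -> lam * 2 ^+ n <= 1/2 ->
  `| theta_comp_expect R mu lam n H
     - lam ^+ 2 * (1 / 2 * ((1 + C_chi2 R mu) ^+ n - (1 - C_chi2 R mu) ^+ n)) |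
  <= 5 * (lam * 2 ^+ n) ^+ 3.
Proof.
move=> hH lam0 lamN.
pose p t := 1 + sq t; pose q t := 1 - sq t.
have mp : measurable_fun setT p.
  by apply: measurable_realfun.measurable_funD => //; exact: measurable_cst.
have mq : measurable_fun setT q.
  by apply: measurable_realfun.measurable_funB => //; exact: measurable_cst.
have hp t : `|p t| <= 2 by have /andP[? ?] := sq01 t; rewrite ger0_norm /p; lra.
have hq t : `|q t| <= 2 by have /andP[? ?] := sq01 t; rewrite ger0_norm /q; lra.
have isq := bdd_integrable muT 1 msq sq_bound.
have Rp : Rintegral mu setT p = 1 + C_chi2 R mu.
  by rewrite RintegralD // Rintegral_cst // muT /= mulr1 C_chi2_cutoff.
have Rq : Rintegral mu setT q = 1 - C_chi2 R mu.
  by rewrite RintegralB // Rintegral_cst // muT /= mulr1 C_chi2_cutoff.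
have split_s (X Y : R) : lam ^+ 2 * (1 / 2 * (X ^+ n - Y ^+ n)) =
                         lam ^+ 2 / 2 * X ^+ n + - (lam ^+ 2 / 2) * Y ^+ n by ring.
rewrite split_s -Rp -Rq; apply: (iint_approx muT muD mp mq hp hq) => ts hs hall.
have ts01 (i : 'I_n) : 0 <= nth 0 ts i <= 1 by apply: (all_nthP 0 hall); rewrite hs.
have prod_cut (f : R -> R) : \prod_(t <- ts) f (sq t) = \prod_(i < n) f (nth 0 ts i ^+ 2).
  rewrite (big_nth 0) hs big_mkord; apply: eq_bigr => i _.
  by rewrite sq_D //; have := ts01 i; rewrite /D /= in_itv.
rewrite (prod_cut (fun x => 1 + x)) (prod_cut (fun x => 1 - x)).
have -> : forall A B : R, lam ^+ 2 / 2 * A + - (lam ^+ 2 / 2) * B = lam ^+ 2 / 2 * (A - B).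
  by move=> A B; ring.
exact: outputs_sum_approx.
Qed.

End ThetaLaw.

(* A variance M2 - m^2 is close to s once both moments are close to s and s is
   small: the squared mean is then of second order. *)
Lemma variance_near {R : realFieldType} {m M2 s delta sigma : R} :
  `|m - s| <= delta -> `|M2 - s| <= delta -> `|s| <= sigma ->
  `|M2 - m ^+ 2 - s| <= delta + (sigma + delta) ^+ 2.
Proof.
move=> hm hM hs.
have hm_abs : `|m| <= sigma + delta.
  by rewrite -[m](subrK s); apply: le_trans (ler_normD _ _) _; rewrite addrC lerD.
have hm2 : m ^+ 2 <= (sigma + delta) ^+ 2.
  by rewrite -real_normK ?num_real // lerXn2r ?nnegrE // (le_trans _ hm_abs).
have -> : M2 - m ^+ 2 - s = (M2 - s) - m ^+ 2 by ring.
apply: le_trans (ler_normB _ _) _; rewrite normrX real_normK ?num_real //.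
exact: lerD.
Qed.

Lemma s_fun_bound (R : realType) (r : nat) (lam C : R) : 0 <= C <= 1 ->
  `|s_fun R r lam C| <= lam ^+ 2 * 2 ^+ (r - 1).
Proof.
move=> /andP[C0 C1]; rewrite /s_fun normrM (ger0_norm (sqr_ge0 lam)).
rewrite ler_wpM2l ?sqr_ge0 //.
have a0 : 0 <= (1 + C) ^+ (r - 1) by rewrite exprn_ge0 //; lra.
have a1 : (1 + C) ^+ (r - 1) <= 2 ^+ (r - 1) by rewrite lerXn2r ?nnegrE //; lra.
have b0 : 0 <= (1 - C) ^+ (r - 1) by rewrite exprn_ge0 //; lra.
have b1 : (1 - C) ^+ (r - 1) <= 1 by rewrite exprn_ile1 //; lra.
have N1 : 1 <= (2 : R) ^+ (r - 1) by rewrite exprn_ege1 //; lra.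
have : `|(1 + C) ^+ (r - 1) - (1 - C) ^+ (r - 1)| <= 2 ^+ (r - 1).
  by rewrite ler_norml; apply/andP; split; lra.
rewrite normrM ger0_norm; lra.
Qed.

Lemma small_lambda {R : realFieldType} {k d lam N : R} :
  1 <= k -> 0 <= N -> 4 * N ^+ 2 < d -> k * d * lam ^+ 2 <= 1 -> 0 <= lam ->
  lam * N <= 1/2.
Proof.
move=> k1 N0 hd hk lam0.
have l2 : 0 <= lam ^+ 2 by rewrite sqr_ge0.
have : 4 * N ^+ 2 * lam ^+ 2 <= 1.
  have : d * lam ^+ 2 <= k * d * lam ^+ 2.
    by rewrite -mulrA ler_peMl // mulr_ge0 //; nra.
  have : 4 * N ^+ 2 * lam ^+ 2 <= d * lam ^+ 2 by rewrite ler_wpM2r // ltW.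
  lra.
have : 0 <= lam * N by rewrite mulr_ge0.
nra.
Qed.

Lemma error_budget {R : realFieldType} {lam N : R} : 0 <= lam -> 1 <= N -> lam * N <= 1/2 ->
  5 * (lam * N) ^+ 3 + (lam ^+ 2 * N + 5 * (lam * N) ^+ 3) ^+ 2
  <= (5 * N ^+ 3 + 36 * N ^+ 6) * lam ^+ 3.
Proof.
move=> lam0 N1 hlN.
have lam1 : lam <= 1 by nra.
have mean_part : lam ^+ 2 * N + 5 * (lam * N) ^+ 3 <= 6 * N ^+ 3 * lam ^+ 2.
  have : N <= N ^+ 3 by rewrite -{1}[N]expr1 ler_weXn2l.
  have : lam ^+ 3 <= lam ^+ 2 by rewrite exprS ler_piMl ?exprn_ge0.
  have : 0 <= N ^+ 3 by rewrite exprn_ge0 //; lra.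
  have : 0 <= lam ^+ 2 by rewrite sqr_ge0.
  rewrite exprMn; nra.
have sq_part : (lam ^+ 2 * N + 5 * (lam * N) ^+ 3) ^+ 2 <= 36 * N ^+ 6 * lam ^+ 3.
  have hx : 0 <= lam ^+ 2 * N + 5 * (lam * N) ^+ 3.
    by rewrite addr_ge0 ?mulr_ge0 ?exprn_ge0 //; lra.
  have hy : 0 <= 6 * N ^+ 3 * lam ^+ 2 := le_trans hx mean_part.
  apply: le_trans (_ : (6 * N ^+ 3 * lam ^+ 2) ^+ 2 <= _); first by rewrite lerXn2r ?nnegrE.
  have -> : (6 * N ^+ 3 * lam ^+ 2) ^+ 2 = 36 * N ^+ 6 * lam ^+ 4 by ring.
  have N0 : 0 <= N by lra.
  rewrite ler_wpM2l ?mulr_ge0 ?exprn_ge0 //.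
  by rewrite (exprS lam 3) ler_piMl ?exprn_ge0.
have cubic : 5 * (lam * N) ^+ 3 = 5 * N ^+ 3 * lam ^+ 3 by ring.
rewrite mulrDl; lra.
Qed.

Theorem mainTheorem17 (R : realType) (r : nat) (hr : (2 <= r)%N) :
  exists d0 K : R, 0 < d0 /\ 0 < K /\
  forall (d lam : R), d0 < d -> 0 <= lam <= 1 ->
    (r - 1)%:R * d * lam ^+ 2 <= 1 ->
  forall (mu : probability R R), mu `[0, 1]%classic = 1%E ->
    `| mean_atanh_tilde R mu lam (r - 1) - s_fun R r lam (C_chi2 R mu) | <= K * lam ^+ 3 /\
    `| var_atanh_tilde R mu lam (r - 1) - s_fun R r lam (C_chi2 R mu) | <= K * lam ^+ 3.
Proof.
pose N : R := 2 ^+ (r - 1).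
have N1 : 1 <= N by rewrite exprn_ege1 //; lra.
exists (4 * N ^+ 2), (5 * N ^+ 3 + 36 * N ^+ 6).
split; first by rewrite mulr_gt0 ?exprn_gt0 //; lra.
split; first by rewrite addr_gt0 ?mulr_gt0 ?exprn_gt0 //; lra.
move=> d lam hd /andP[lam0 _] hdl mu mu01.
have k1 : 1 <= (r - 1)%:R :> R by rewrite ler1n subn_gt0.
have lamN : lam * N <= 1/2 by apply: small_lambda k1 _ hd hdl lam0; lra.
set s := s_fun R r lam (C_chi2 R mu).
have mean : `|mean_atanh_tilde R mu lam (r - 1) - s| <= 5 * (lam * N) ^+ 3 :=
  theta_comp_expect_approx mu01 (near_square_atanh R) lam0 lamN.
have second : `|tilde_expect R mu lam (r - 1) (fun v => atanh R v ^+ 2) - s|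
              <= 5 * (lam * N) ^+ 3 :=
  theta_comp_expect_approx mu01 (near_square_atanh2 R) lam0 lamN.
have hs : `|s| <= lam ^+ 2 * N.
  by apply: s_fun_bound; exact: C_chi2_01.
have budget := error_budget lam0 N1 lamN.
have cubic0 : 0 <= (lam ^+ 2 * N + 5 * (lam * N) ^+ 3) ^+ 2 by rewrite sqr_ge0.
split; first by apply: le_trans mean _; lra.
apply: le_trans (variance_near mean second hs) budget.
Qed.
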